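(* Consider the SRLOD model on a finite connected graph $G$ with $N\ge2$ agents, learning rate $\alpha\in(0,1)$, exploration rate $\epsilon\in(0,1)$, and Q-values in $[-1,1]$. Suppose that at some time $t_0\in\mathbb{N}$ there is an opinion $o\in\{-1,1\}$ with $q^i_o(t_0)>q^i_{-o}(t_0)$ for every agent $i\in\{1,\dots,N\}$. Then $$\mathbb{P}\big(q^i_o(t)>q^i_{-o}(t)\ \ \forall i\in\{1,\dots,N\},\ \forall t\ge t_0\big)=0,$$ i.e. consensus is almost surely eventually left.
   Context: The SRLOD (symmetric reinforcement learning for opinion dynamics) model: $G=(V,E)$ is a finite simple undirected graph with $V=\{1,\dots,N\}$. Each agent $i$ holds Q-values $q^i_1(t),q^i_{-1}(t)$, initialized in $[-1,1]$; agent $i$'s preferred opinion is the $o$ with $q^i_o(t)\ge q^i_{-o}(t)$ (opinion $1$ in case of a tie). In each discrete round $t$, an edge $(i,j)\in E$ is chosen uniformly at random; independently, each of $i$ and $j$ expresses an opinion $o_i(t),o_j(t)\in\{-1,1\}$, equal to its preferred opinion with probability $1-\epsilon$ and the other opinion with probability $\epsilon$; then both update only the Q-value of the opinion they expressed: $q^i_{o_i(t)}(t+1)=(1-\alpha)q^i_{o_i(t)}(t)+\alpha\,o_i(t)o_j(t)$ and $q^j_{o_j(t)}(t+1)=(1-\alpha)q^j_{o_j(t)}(t)+\alpha\,o_i(t)o_j(t)$. All other Q-values are unchanged. *)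

From HB Require Import structures.
From mathcomp Require Import all_boot all_order all_algebra.
From mathcomp Require Import all_classical all_reals all_analysis.
Set Implicit Arguments. Unset Strict Implicit. Unset Printing Implicit Defensive.
Import Order.TTheory GRing.Theory Num.Theory.
Local Open Scope ring_scope.

(* Opinions are encoded by booleans: true <-> +1, false <-> -1. *)
Definition sgnb {R : pzRingType} (b : bool) : R := if b then 1 else -1.

Definition qstate (R : Type) (N : nat) := 'I_N -> bool -> R.

(* Preferred opinion: o with q_o >= q_{-o}; ties go to +1 (true). *)
Definition pref {R : realDomainType} {N} (q : qstate R N) (i : 'I_N) : bool :=
  q i false <= q i true.

(* One round's random data: the chosen edge (i, j) and the exploration
   flags of i and j (flag = true means "express the non-preferred opinion",
   which happens with probability eps). *)
Definition round_choice (N : nat) : Type := ('I_N * 'I_N * bool * bool)%type.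

Definition expressed {R : realDomainType} {N} (q : qstate R N) (i : 'I_N)
  (flag : bool) : bool := if flag then ~~ pref q i else pref q i.

Definition srlod_step {R : realDomainType} {N} (alpha : R) (q : qstate R N)
  (c : round_choice N) : qstate R N :=
  let: (i, j, fi, fj) := c in
  let oi := expressed q i fi in
  let oj := expressed q j fj in
  let r : R := sgnb oi * sgnb oj in
  fun k o =>
    if (k == i) && (o == oi) then (1 - alpha) * q i oi + alpha * r
    else if (k == j) && (o == oj) then (1 - alpha) * q j oj + alpha * r
    else q k o.

Fixpoint srlod_traj {R : realDomainType} {N} (alpha : R) (q0 : qstate R N)
  (cs : nat -> round_choice N) (t : nat) : qstate R N :=
  match t with
  | 0 => q0
  | t'.+1 => srlod_step alpha (srlod_traj alpha q0 cs t') (cs t')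
  end.

Definition consensus {R : realDomainType} {N} (o : bool) (q : qstate R N) : Prop :=
  forall i : 'I_N, q i (~~ o) < q i o.

Definition simple_graph {N} (e : rel 'I_N) : Prop :=
  symmetric e /\ irreflexive e.
Definition connected_graph {N} (e : rel 'I_N) : Prop :=
  forall i j : 'I_N, connect e i j.

(* Undirected edges, each represented once as (i, j) with i < j. *)
Definition edge_set {N} (e : rel 'I_N) : {set 'I_N * 'I_N} :=
  [set p : 'I_N * 'I_N | (p.1 < p.2)%N && e p.1 p.2].

Definition choice_prob {R : realFieldType} {N} (e : rel 'I_N) (eps : R)
  (c : round_choice N) : R :=
  let: (i, j, fi, fj) := c in
  (if (i, j) \in edge_set e then (#|edge_set e|%:R)^-1 else 0) *
  (if fi then eps else 1 - eps) * (if fj then eps else 1 - eps).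

From HB Require Import structures.
From mathcomp Require Import all_boot all_order all_algebra.
From mathcomp Require Import all_classical all_reals all_analysis.
From mathcomp Require Import ring lra zify.
Import Order.TTheory GRing.Theory Num.Theory.
Local Open Scope ring_scope.
Local Open Scope classical_set_scope.

(* Under consensus on o, take an edge (i, j) and consider the rounds in which
   first i explores while j conforms, so that j is punished for expressing o
   and q^j_o drops to at most 1 - 2 alpha, and then m rounds in which both
   explore, rewarding j for -o, so that 1 - q^j_{-o} shrinks by the factor
   1 - alpha each round and ends below 2 (1 - alpha)^m.  For
   (1 - alpha)^m < alpha this breaks consensus.  This block of m + 1 rounds
   has a fixed probability p > 0; by the product form of the law, its
   occurrences in disjoint windows after t0 are independent, so it is missed
   in the first M windows with probability (1 - p)^M -> 0. *)

Definition prefix_determined {C : Type} (T : nat) (A : (nat -> C) -> Prop) :=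
  forall ys zs : nat -> C, (forall t, (t < T)%N -> ys t = zs t) -> A ys -> A zs.

Definition occurs_at {C : Type} (pat : nat -> C) (K T : nat) (ys : nat -> C) :=
  forall s, (s < K)%N -> ys (T + s)%N = pat s.

Lemma occurs_at_prefix_determined {C : Type} (pat : nat -> C) K T :
  prefix_determined (T + K) (occurs_at pat K T).
Proof. by move=> ys zs yz occ s ltsK; rewrite -yz ?occ // ltn_add2l. Qed.

Definition no_occurrence_before {C : Type} (pat : nat -> C) (K t0 M : nat)
  (ys : nat -> C) := forall n, (n < M)%N -> ~ occurs_at pat K (t0 + n * K) ys.

Lemma no_occurrence_before_prefix_determined {C : Type} (pat : nat -> C) K t0 M :
  prefix_determined (t0 + M * K) (no_occurrence_before pat K t0 M).
Proof.
move=> ys zs yz no_ys n ltnM occ_zs; apply: (no_ys n ltnM) => s ltsK.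
rewrite yz ?occ_zs //; have : (n.+1 * K <= M * K)%N by rewrite leq_mul2r ltnM orbT.
by rewrite mulSn; lia.
Qed.

Definition splice {C : Type} {T : nat} (f : {ffun 'I_T -> C}) (d : nat -> C) :
  nat -> C := fun t => if insub t is Some i then f i else d t.

Lemma splice_ord {C : Type} {T} (f : {ffun 'I_T -> C}) d (i : 'I_T) :
  splice f d i = f i.
Proof. by rewrite /splice valK. Qed.

Lemma splice_ge {C : Type} {T} (f : {ffun 'I_T -> C}) d t :
  (T <= t)%N -> splice f d t = d t.
Proof. by move=> leTt; rewrite /splice insubN // -leqNgt. Qed.

Lemma exists_expr_lt {R : realType} {r y : R} :
  0 <= r < 1 -> 0 < y -> exists n, r ^+ n < y.
Proof.
move=> /andP[r_ge0 r_lt1] y_gt0.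
have /cvg_expr/cvgrPdist_lt/(_ y y_gt0)[n _ close] : `|r| < 1 by rewrite ger0_norm.
exists n; have := close n (leqnn n).
by rewrite /= sub0r normrN ger0_norm ?exprn_ge0.
Qed.

Lemma le_geometric_eq0 {R : realType} {x : \bar R} {r : R} :
  (0 <= x)%E -> 0 <= r < 1 -> (forall n, (x <= (r ^+ n)%:E)%E) -> x = 0%E.
Proof.
move=> x_ge0 r01 le_x; case: x x_ge0 le_x => [x| |] //=.
- rewrite lee_fin le_eqVlt => /predU1P[<- //|x_gt0] le_x; exfalso.
  have [n lt_rn] := exists_expr_lt r01 x_gt0.
  by have := le_x n; rewrite lee_fin leNgt lt_rn.
- by move=> _ /(_ 0%N).
Qed.

Section ProductLaw.
Context {R : realType} {d : measure_display} {Omega : measurableType d}.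
Context (P : probability Omega R) {C : finType} (Y : nat -> Omega -> C) (w : C -> R).
Hypothesis Y_measurable : forall t c, measurable [set x | Y t x = c].
Hypothesis P_cylinder : forall (T : nat) (cs : nat -> C),
  P [set x | forall t, (t < T)%N -> Y t x = cs t] = (\prod_(t < T) w (cs t))%:E.

Definition event (A : (nat -> C) -> Prop) : set Omega := [set x | A (fun t => Y t x)].

Definition cylinder (T : nat) (cs : nat -> C) : set Omega :=
  event (fun ys => forall t, (t < T)%N -> ys t = cs t).

Lemma cylinder_measurable T cs : measurable (cylinder T cs).
Proof.
have -> : cylinder T cs = \bigcap_(t in [set t | (t < T)%N]) [set x | Y t x = cs t].
  by apply/seteqP; split => x /= cs_x t ltT; apply: cs_x.
by apply: bigcap_measurableType => t _; apply: Y_measurable.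
Qed.

Lemma prefix_event_bigcup {T A} (dflt : nat -> C) : prefix_determined T A ->
  event A = \bigcup_(f in [set f : {ffun 'I_T -> C} | A (splice f dflt)])
              cylinder T (splice f dflt).
Proof.
move=> A_det; apply/seteqP; split => x /=.
  move=> Ax; exists [ffun i : 'I_T => Y i x].
    by apply: A_det Ax => t ltT; rewrite -[t]/(val (Ordinal ltT)) splice_ord ffunE.
  by move=> t ltT; rewrite -[t]/(val (Ordinal ltT)) splice_ord ffunE.
by move=> [f Af cyl_x]; apply: A_det Af => t ltT; rewrite cyl_x.
Qed.

Lemma prefix_event_measurable {T A} : prefix_determined T A -> measurable (event A).
Proof.
move=> A_det; have [->|/set0P[x _]] := eqVneq (event A) set0.
  exact: measurable0.
rewrite (prefix_event_bigcup (fun t => Y t x) A_det).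
apply: fin_bigcup_measurable; first exact: finite_finset.
by move=> f _; exact: cylinder_measurable.
Qed.

Lemma measure_prefix_eventI {T A} (dflt : nat -> C) {B : set Omega} :
  prefix_determined T A -> measurable B ->
  P (event A `&` B) = (\sum_(f \in [set f : {ffun 'I_T -> C} | A (splice f dflt)])
                         P (cylinder T (splice f dflt) `&` B))%E.
Proof.
move=> A_det mB; rewrite (prefix_event_bigcup dflt A_det) setI_bigcupl.
apply: measure_fin_bigcup; first exact: finite_finset.
  move=> f g _ _ [x [[f_x _] [g_x _]]]; apply/ffunP => i.
  by rewrite -(splice_ord f dflt) -(splice_ord g dflt) -f_x ?ltn_ord // g_x.
by move=> f _; apply: measurableI => //; exact: cylinder_measurable.
Qed.

(* The tail of the splice is the pattern itself, so the cylinder of length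
   T + K absorbs the occurrence of the pattern at T. *)
Lemma cylinder_spliceI_occurs_at T K pat (f : {ffun 'I_T -> C}) :
  let dflt t := pat (t - T)%N in
  cylinder T (splice f dflt) `&` event (occurs_at pat K T)
  = cylinder (T + K) (splice f dflt).
Proof.
move=> dflt; apply/seteqP; split => x /=.
  move=> [cyl_x occ_x] t ltTK; have [ltT|leTt] := ltnP t T; first exact: cyl_x.
  rewrite splice_ge // /dflt -(subnKC leTt) occ_x ?addKn //.
  by rewrite -(ltn_add2l T) subnKC.
move=> cyl_x; split=> [t ltT|s ltK]; first by apply: cyl_x; apply: ltn_addr.
by rewrite cyl_x ?ltn_add2l // splice_ge ?leq_addr // /dflt addKn.
Qed.

Lemma measure_prefix_eventI_occurs_at {T A} K pat : prefix_determined T A ->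
  P (event A `&` event (occurs_at pat K T))
  = ((\prod_(s < K) w (pat s))%:E * P (event A))%E.
Proof.
move=> A_det; set dflt := fun t => pat (t - T)%N.
have m_occ := prefix_event_measurable (occurs_at_prefix_determined pat K T).
rewrite (measure_prefix_eventI dflt A_det m_occ).
rewrite -[in RHS](setIT (event A)) (measure_prefix_eventI dflt A_det measurableT).
rewrite ge0_mule_fsumr; last by move=> f; exact: measure_ge0.
apply: eq_fsbigr => f _; rewrite setIT cylinder_spliceI_occurs_at.
rewrite !P_cylinder big_split_ord -EFinM mulrC; congr (_ * _)%:E.
by apply: eq_bigr => s _; rewrite splice_ge ?leq_addr // /dflt addKn.
Qed.

Section Blocks.
Variables (pat : nat -> C) (K t0 : nat).
Let p := \prod_(s < K) w (pat s).

Lemma measure_no_occurrence_before M :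
  P (event (no_occurrence_before pat K t0 M)) = ((1 - p) ^+ M)%:E.
Proof.
elim: M => [|M IH].
  rewrite expr0 -(probability_setT P); congr (P _).
  by apply/seteqP; split => x //= _ n.
have M_det := no_occurrence_before_prefix_determined pat K t0 M.
have -> : event (no_occurrence_before pat K t0 M.+1) =
    event (no_occurrence_before pat K t0 M) `\` event (occurs_at pat K (t0 + M * K)).
  apply/seteqP; split => x /=.
    by move=> no_x; split; [move=> n /ltnW; apply: no_x | apply: no_x].
  by move=> [no_x occ_x] n; rewrite ltnS leq_eqVlt => /predU1P[->|] //; apply: no_x.
have m_no := prefix_event_measurable M_det.
have m_occ := prefix_event_measurable (occurs_at_prefix_determined pat K (t0 + M * K)).
rewrite measureD //; last by rewrite (le_lt_trans (probability_le1 P m_no)) ?ltry.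
transitivity (P (event (no_occurrence_before pat K t0 M))
              - p%:E * P (event (no_occurrence_before pat K t0 M)))%E.
  by congr (_ - _)%E; exact: measure_prefix_eventI_occurs_at.
by rewrite IH -EFinM -EFinB exprS; congr (_%:E); ring.
Qed.

Lemma never_occurs_measurable :
  measurable (event (fun ys => forall n, ~ occurs_at pat K (t0 + n * K) ys)).
Proof.
rewrite (_ : event _ = \bigcap_n ~` event (occurs_at pat K (t0 + n * K))).
  apply: bigcap_measurableType => n _; apply: measurableC.
  exact: prefix_event_measurable (occurs_at_prefix_determined _ _ _).
by apply/seteqP; split => [x never n _|x never n]; apply: never.
Qed.

Lemma measure_never_occurs : 0 < p ->
  P (event (fun ys => forall n, ~ occurs_at pat K (t0 + n * K) ys)) = 0%E.
Proof.
move=> p_gt0; have p_le1 : p <= 1.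
  by rewrite -lee_fin -P_cylinder probability_le1 //; exact: cylinder_measurable.
have p_geom : 0 <= 1 - p < 1 by apply/andP; split; lra.
apply: (le_geometric_eq0 (measure_ge0 _ _) p_geom).
move=> M; rewrite -measure_no_occurrence_before le_measure ?inE //.
- exact: never_occurs_measurable.
- exact: prefix_event_measurable (no_occurrence_before_prefix_determined _ _ _ _).
- by move=> x /= never n _; apply: never.
Qed.
End Blocks.

End ProductLaw.

Section Dynamics.
Context {R : realType} {N : nat} (alpha : R).
Implicit Types (q : qstate R N) (cs : nat -> round_choice N).
Hypothesis alpha01 : 0 < alpha < 1.

Definition qtable_bounded q := forall k b, -1 <= q k b <= 1.

Lemma sgnb_mul_bound (a b : bool) : -1 <= @sgnb R a * @sgnb R b <= 1.
Proof.
by case: a; case: b; rewrite /sgnb ?mulr1 ?mulrN1 ?mulN1r ?opprK; apply/andP; split; lra.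
Qed.

Lemma srlod_step_bounded q c :
  qtable_bounded q -> qtable_bounded (srlod_step alpha q c).
Proof.
move: c => [[[i j] fi] fj] q_bd k b /=.
have relax_bd x r : -1 <= x <= 1 -> -1 <= r <= 1 ->
    -1 <= (1 - alpha) * x + alpha * r <= 1.
  by case/andP: alpha01 => ? ? /andP[? ?] /andP[? ?]; apply/andP; split; nra.
by do 2?case: ifP => _; rewrite ?relax_bd ?sgnb_mul_bound ?q_bd.
Qed.

Lemma srlod_traj_bounded {q} cs t :
  qtable_bounded q -> qtable_bounded (srlod_traj alpha q cs t).
Proof. by move=> q_bd; elim: t => //= t IH; exact: srlod_step_bounded. Qed.

Lemma srlod_traj_ext q {cs cs' t} : (forall s, (s < t)%N -> cs s = cs' s) ->
  srlod_traj alpha q cs t = srlod_traj alpha q cs' t.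
Proof.
elim: t => //= t IH cs_eq.
by rewrite IH ?cs_eq // => s /ltnW; exact: cs_eq.
Qed.

Lemma srlod_trajD q cs T s : srlod_traj alpha q cs (T + s) =
  srlod_traj alpha (srlod_traj alpha q cs T) (fun s => cs (T + s)%N) s.
Proof. by elim: s => [|s /= <-]; rewrite ?addn0 ?addnS. Qed.

Lemma consensus_prefix_determined q o t :
  prefix_determined t (fun cs => consensus o (srlod_traj alpha q cs t)).
Proof. by move=> cs cs' cs_eq; rewrite (srlod_traj_ext _ cs_eq). Qed.

Lemma consensus_expressed {o q} i f :
  consensus o q -> expressed q i f = f (+) o.
Proof.
move=> /(_ i) cons_i; rewrite /expressed /pref.
have -> : (q i false <= q i true) = o.
  by case: o cons_i => /= lt_qi; [rewrite ltW | rewrite leNgt lt_qi].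
by case: f.
Qed.

Lemma sgnb_negbM (b : bool) : sgnb (~~ b) * sgnb b = -1 :> R.
Proof. by case: b; rewrite /sgnb ?mulN1r ?mulrN1. Qed.

Lemma sgnb_sqr (b : bool) : sgnb b * sgnb b = 1 :> R.
Proof. by case: b; rewrite /sgnb ?mulr1 ?mulrNN ?mulr1. Qed.

Lemma srlod_step_snd q (i j : 'I_N) fi fj b : i != j ->
  srlod_step alpha q (i, j, fi, fj) j b =
  if b == expressed q j fj then
    (1 - alpha) * q j b + alpha * (sgnb (expressed q i fi) * sgnb (expressed q j fj))
  else q j b.
Proof. by rewrite eq_sym => /negbTE ji /=; rewrite ji eqxx /=; case: eqP => [->|]. Qed.

Section Consensus.
Context {o : bool} {q : qstate R N} {i j : 'I_N}.
Hypotheses (cons_q : consensus o q) (ij : i != j).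

Lemma consensus_step_contrarian :
  srlod_step alpha q (i, j, true, false) j o = (1 - alpha) * q j o - alpha /\
  srlod_step alpha q (i, j, true, false) j (~~ o) = q j (~~ o).
Proof.
rewrite !srlod_step_snd // !(consensus_expressed _ _ cons_q) /= eqxx.
have -> : (~~ o == o) = false by case: (o).
by rewrite sgnb_negbM mulrN1.
Qed.

Lemma consensus_step_explorers :
  srlod_step alpha q (i, j, true, true) j o = q j o /\
  1 - srlod_step alpha q (i, j, true, true) j (~~ o) = (1 - alpha) * (1 - q j (~~ o)).
Proof.
rewrite !srlod_step_snd // !(consensus_expressed _ _ cons_q) /= eqxx.
have -> : (o == ~~ o) = false by case: (o).
by rewrite sgnb_sqr; split => //; ring.
Qed.

End Consensus.

Definition break_pattern (i j : 'I_N) (s : nat) : round_choice N :=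
  (i, j, true, s != 0%N).

Lemma consensus_break {q cs o} {i j : 'I_N} {m} :
  i != j -> qtable_bounded q -> (1 - alpha) ^+ m < alpha ->
  (forall s, (s <= m)%N -> cs s = break_pattern i j s) ->
  ~ (forall t, (t <= m.+1)%N -> consensus o (srlod_traj alpha q cs t)).
Proof.
move=> ij q_bd small pat_cs cons; pose qt := srlod_traj alpha q cs.
have qt_step t : qt t.+1 = srlod_step alpha (qt t) (cs t) by [].
have [qt1_o qt1_no] : qt 1 j o = (1 - alpha) * q j o - alpha /\
                      qt 1 j (~~ o) = q j (~~ o).
  rewrite qt_step pat_cs //.
  exact: consensus_step_contrarian (cons 0%N _) ij.
have run s : (s <= m)%N -> qt s.+1 j o = qt 1 j o /\
    1 - qt s.+1 j (~~ o) = (1 - alpha) ^+ s * (1 - qt 1 j (~~ o)).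
  elim: s => [|s IH] le_sm; first by rewrite expr0 mul1r.
  have [<- IHno] := IH (ltnW le_sm).
  have -> : qt s.+2 = srlod_step alpha (qt s.+1) (i, j, true, true).
    by rewrite qt_step pat_cs.
  rewrite exprS -mulrA -IHno.
  exact: consensus_step_explorers (cons s.+1 (ltnW le_sm)) ij.
have [qtm_o qtm_no] := run m (leqnn m).
have := cons m.+1 (leqnn _) j; rewrite -/qt qtm_o qt1_o.
have /andP[? ?] := q_bd j o; have /andP[? ?] := q_bd j (~~ o).
have : 0 <= (1 - alpha) ^+ m by rewrite exprn_ge0 // subr_ge0 ltW //; case/andP: alpha01.
case/andP: alpha01; nra.
Qed.

Lemma consensus_forever_no_break {q cs o} {i j : 'I_N} {m t0} :
  i != j -> qtable_bounded q -> (1 - alpha) ^+ m < alpha ->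
  (forall t, (t0 <= t)%N -> consensus o (srlod_traj alpha q cs t)) ->
  forall T, (t0 <= T)%N -> ~ occurs_at (break_pattern i j) m.+1 T cs.
Proof.
move=> ij q_bd small cons T le_t0T occ.
apply: (consensus_break ij (srlod_traj_bounded cs T q_bd) small).
  by move=> s le_sm; apply: occ.
by move=> t _; rewrite -srlod_trajD; apply: cons; apply: leq_trans (leq_addr _ _).
Qed.

End Dynamics.

Lemma edge_set_witness {N} {e : rel 'I_N} : (2 <= N)%N ->
  irreflexive e -> connected_graph e -> exists i j, (i, j) \in edge_set e.
Proof.
move=> N2 e_irr e_conn; pose i0 := Ordinal (ltnW N2).
have [[|x p] /= path_i0 last_i0] := connectP (e_conn i0 (Ordinal N2)).
  by move/(congr1 val): last_i0.
case/andP: path_i0 => e_i0x _; exists i0, x; rewrite inE /= e_i0x andbT lt0n.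
apply/eqP => x0; have x_i0 : x = i0 by exact: val_inj.
by move: e_i0x; rewrite x_i0 e_irr.
Qed.

Lemma edge_set_neq {N} {e : rel 'I_N} {i j} : (i, j) \in edge_set e -> i != j.
Proof. by rewrite inE /= => /andP[lt_ij _]; rewrite neq_ltn lt_ij. Qed.

Lemma choice_prob_gt0 {R : realFieldType} {N} {e : rel 'I_N} {eps : R} {i j} fi fj :
  0 < eps < 1 -> (i, j) \in edge_set e -> 0 < choice_prob e eps (i, j, fi, fj).
Proof.
move=> /andP[eps_gt0 eps_lt1] ij_edge; rewrite /choice_prob ij_edge.
have card_gt0 : (0 < #|edge_set e|)%N by apply/card_gt0P; exists (i, j).
by rewrite !mulr_gt0 ?invr_gt0 ?ltr0n //; case: (fi); case: (fj); rewrite ?subr_gt0.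
Qed.

Theorem lemma3 (R : realType) (N : nat) (e : rel 'I_N) (alpha eps : R)
  (d : measure_display) (Omega : measurableType d) (P : probability Omega R)
  (Y : nat -> Omega -> round_choice N) (q0 : qstate R N) (o : bool) (t0 : nat) :
  (2 <= N)%N ->
  simple_graph e -> connected_graph e ->
  0 < alpha < 1 -> 0 < eps < 1 ->
  (forall i b, -1 <= q0 i b <= 1) ->
  (forall t c, measurable [set w | Y t w = c]) ->
  (forall (T : nat) (cs : nat -> round_choice N),
      P [set w | forall t, (t < T)%N -> Y t w = cs t]
      = (\prod_(t < T) choice_prob e eps (cs t))%:E) ->
  P [set w | forall t, (t0 <= t)%N ->
               consensus o (srlod_traj alpha q0 (fun s => Y s w) t)] = 0%E.
Proof.
move=> N2 [_ e_irr] e_conn alpha01 eps01 q0_bd Y_meas P_cyl.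
have [i [j ij_edge]] := edge_set_witness N2 e_irr e_conn.
have [m small] : exists m, (1 - alpha) ^+ m < alpha.
  by case/andP: alpha01 => ? ?; apply: exists_expr_lt => //; apply/andP; split; lra.
apply: (subset_measure0 _ (never_occurs_measurable Y Y_meas (break_pattern i j) m.+1 t0)).
- rewrite (_ : [set w | _] = \bigcap_(t in [set t | (t0 <= t)%N])
      event Y (fun ys => consensus o (srlod_traj alpha q0 ys t))).
    apply: bigcap_measurableType => t _.
    exact: prefix_event_measurable Y Y_meas _ _ (consensus_prefix_determined _ _ _ _).
  by apply/seteqP; split => x cons_x t le_t0t; apply: cons_x.
- move=> x cons_x n.
  apply: (consensus_forever_no_break _ alpha01 (edge_set_neq ij_edge) q0_bd small cons_x).
  exact: leq_addr.
- apply: (measure_never_occurs P Y _ Y_meas P_cyl) => //.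
  by apply: prodr_gt0 => s _; exact: choice_prob_gt0.
Qed.
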